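(* A $\rho$-shifted weight $\lambda\in X+\rho$ is called atypical if $(\lambda,\beta)=0$ for some $\beta\in\{\delta\pm\epsilon_i:i=1,2,3\}$. For $k\in\mathbb N$ let $\mathrm{WT}_k=\{\sigma(f_{k,n}):\sigma\in W,\ n\in\mathbb N\}$. Then the sets $\mathrm{WT}_k$ ($k\in\mathbb N$) are pairwise disjoint and their union is exactly the set of atypical weights in $X+\rho$; in particular every atypical weight is $W$-conjugate to some $f_{k,n}$.
   Context: $\mathfrak g=G(3)$, the 31-dimensional exceptional simple complex Lie superalgebra with $\mathfrak g_{\bar0}=G_2\oplus\mathfrak{sl}_2$. The dual $\mathfrak h^*$ of its Cartan subalgebra is spanned by $\delta,\epsilon_1,\epsilon_2,\epsilon_3$ subject to $\epsilon_1+\epsilon_2+\epsilon_3=0$, with bilinear form $(\delta,\delta)=-2$, $(\delta,\epsilon_i)=0$, $(\epsilon_i,\epsilon_i)=2$, $(\epsilon_i,\epsilon_j)=-1$ ($i\ne j$). Simple roots $\epsilon_2-\epsilon_1,\ \epsilon_1,\ \delta+\epsilon_3$; positive even roots $2\delta,\epsilon_1,\epsilon_2,-\epsilon_3,\epsilon_2-\epsilon_1,\epsilon_1-\epsilon_3,\epsilon_2-\epsilon_3$; positive odd roots $\delta,\ \delta\pm\epsilon_i$ ($i=1,2,3$). $\rho=-\tfrac52\delta+2\epsilon_1+3\epsilon_2$, and $X=\mathbb Z\delta\oplus\mathbb Z\epsilon_1\oplus\mathbb Z\epsilon_2$ is the integral weight lattice. The Weyl group $W=\langle s_0\rangle\times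 W_2$ acts linearly on $\mathfrak h^*$: $s_0$ sends $\delta\mapsto-\delta$ and fixes the $\epsilon_i$; $W_2$ (Weyl group of $G_2$, dihedral of order 12) fixes $\delta$ and is generated by $s_1$ (swaps $\epsilon_1,\epsilon_2$, fixes $\epsilon_3$) and $s_2$ ($\epsilon_1\mapsto-\epsilon_1$, $\epsilon_2\mapsto-\epsilon_3$, $\epsilon_3\mapsto-\epsilon_2$). For $k,n\in\mathbb N$ the anti-dominant weights $f_{k,n}\in X+\rho$ are: $f_{k,n}=-\tfrac{2n+1}{2}\delta-(n+k+1)\epsilon_1-(2k+1)\epsilon_2$ for $0\le n\le k-1$; $f_{k,k}=-\tfrac{2k+1}{2}\delta-(2k+1)\epsilon_1-(2k+1)\epsilon_2$; $f_{k,n}=-\tfrac{2n+1}{2}\delta-(2k+1)\epsilon_1-(n+k+1)\epsilon_2$ for $k+1\le n\le 3k$; $f_{k,3k+1}=-\tfrac{6k+3}{2}\delta-(2k+1)\epsilon_1-(4k+2)\epsilon_2$; $f_{k,n}=-\tfrac{2n+1}{2}\delta-(n-k)\epsilon_1-(n+k+1)\epsilon_2$ for $n\ge 3k+2$. *)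

From HB Require Import structures.
From mathcomp Require Import all_boot all_order all_algebra.
Set Implicit Arguments. Unset Strict Implicit. Unset Printing Implicit Defensive.
Import Order.TTheory GRing.Theory Num.Theory.
Local Open Scope ring_scope.

(* An element of the dual of h is written  d*delta + e1*eps1 + e2*eps2  (eps3 = -eps1-eps2),
   encoded as the triple (d, e1, e2) of rationals. *)
Record wt := Wt { wd : rat; we1 : rat; we2 : rat }.

Definition wadd (x y : wt) := Wt (wd x + wd y) (we1 x + we1 y) (we2 x + we2 y).
Definition wopp (x : wt) := Wt (- wd x) (- we1 x) (- we2 x).

Definition delta : wt := Wt 1 0 0.
Definition eps1 : wt := Wt 0 1 0.
Definition eps2 : wt := Wt 0 0 1.
Definition eps3 : wt := Wt 0 (-1) (-1).

(* bilinear form: (delta,delta)=-2, (delta,eps_i)=0, (eps_i,eps_i)=2, (eps_i,eps_j)=-1 *)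
Definition form (x y : wt) : rat :=
  - 2 * wd x * wd y + 2 * we1 x * we1 y + 2 * we2 x * we2 y
  - we1 x * we2 y - we2 x * we1 y.

Definition rho : wt := Wt (- (5%:R / 2%:R)) 2 3.

Definition is_int (q : rat) : Prop := exists z : int, q = z%:~R.

Definition inX (x : wt) : Prop := [/\ is_int (wd x), is_int (we1 x) & is_int (we2 x)].
Definition inXrho (x : wt) : Prop := inX (wadd x (wopp rho)).

Definition atypical (x : wt) : Prop :=
  exists (i : 'I_3) (sgn : bool),
    let e := nth eps1 [:: eps1; eps2; eps3] i in
    form x (wadd delta (if sgn then e else wopp e)) = 0.

Definition s0 (x : wt) : wt := Wt (- wd x) (we1 x) (we2 x).
Definition s1 (x : wt) : wt := Wt (wd x) (we2 x) (we1 x).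
(* s2: eps1 -> -eps1, eps2 -> -eps3 = eps1 + eps2 *)
Definition s2 (x : wt) : wt := Wt (wd x) (we2 x - we1 x) (we2 x).

(* W = group generated by s0, s1, s2 (finite, so generated as a monoid) *)
Inductive inW : (wt -> wt) -> Prop :=
  | inW_id : inW id
  | inW_s0 f : inW f -> inW (s0 \o f)
  | inW_s1 f : inW f -> inW (s1 \o f)
  | inW_s2 f : inW f -> inW (s2 \o f).

Definition nr (n : nat) : rat := n%:R.

Definition f (k n : nat) : wt :=
  let d := - ((2 * nr n + 1) / 2%:R) in
  if (n < k)%N then Wt d (- (nr n + nr k + 1)) (- (2 * nr k + 1))
  else if n == k then Wt d (- (2 * nr k + 1)) (- (2 * nr k + 1))
  else if (n <= 3 * k)%N then Wt d (- (2 * nr k + 1)) (- (nr n + nr k + 1))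
  else if n == (3 * k).+1 then Wt (- ((6 * nr k + 3) / 2%:R)) (- (2 * nr k + 1)) (- (4 * nr k + 2))
  else Wt d (- (nr n - nr k)) (- (nr n + nr k + 1)).

Definition WT (k : nat) (x : wt) : Prop :=
  exists sigma n, inW sigma /\ x = sigma (f k n).

From mathcomp Require Import all_boot all_order all_algebra.
From mathcomp Require Import zify ring.
Import GRing.Theory Num.Theory.
Local Open Scope ring_scope.

(* Proof idea: write x in X + rho as (D/2) delta + A eps1 + B eps2 with D, A, B
   integers and D odd; x is atypical iff D = +-(2A - B), +-(2B - A) or +-(A + B).
   W acts by isometries and preserves this set, and (x, x) =
   (4(A^2 - AB + B^2) - D^2)/2 equals 3(2k + 1)^2/2 on every f_{k,n}, which
   separates the sets WT_k.  Conversely s0, s1, s2 and the element -1 of W(G2)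
   bring every atypical weight to one with D = 2A - B and D, B < 0; such a
   weight is, up to s1 and s2, f_{k,n} with 2n + 1 = -D and 2k + 1 = -B. *)

Definition wtz (D A B : int) : wt := Wt (D%:~R / 2) A%:~R B%:~R.

Lemma s0_wtz D A B : s0 (wtz D A B) = wtz (- D) A B.
Proof. by rewrite /s0 /wtz /= intrN mulNr. Qed.

Lemma s1_wtz D A B : s1 (wtz D A B) = wtz D B A.
Proof. by []. Qed.

Lemma s2_wtz D A B : s2 (wtz D A B) = wtz D (B - A) B.
Proof. by rewrite /s2 /wtz /= intrB. Qed.

Lemma inXrho_wtzP x :
  inXrho x <-> exists D A B, x = wtz D A B /\ (D %% 2)%Z = 1.
Proof.
split.
- case: x => d a b [[z0 h0] [z1 h1] [z2 h2]] /=; rewrite /= in h0 h1 h2.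
  exists (2 * z0 - 5), (z1 + 2), (z2 + 3); split; last by lia.
  by rewrite /wtz; congr Wt; rewrite ?intrB ?intrD ?intrM -?h0 -?h1 -?h2; field.
- move=> [D [A [B [-> oddD]]]].
  have [z ->] : exists z, D = 2 * z + 1 by exists ((D - 1) %/ 2)%Z; lia.
  split; [exists (z + 3) | exists (A - 2) | exists (B - 3)];
    by rewrite /= ?intrD ?intrB ?intrM; field.
Qed.

Lemma form_delta_add x y : form x (wadd delta y) = form x delta + form x y.
Proof. by rewrite /form /=; ring. Qed.

Lemma form_opp x y : form x (wopp y) = - form x y.
Proof. by rewrite /form /=; ring. Qed.

Lemma form_wtz_delta D A B : form (wtz D A B) delta = (- D)%:~R.
Proof. by rewrite /form /= intrN; field. Qed.

Lemma form_wtz_eps1 D A B : form (wtz D A B) eps1 = (2 * A - B)%:~R.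
Proof. by rewrite /form /= intrB intrM; ring. Qed.

Lemma form_wtz_eps2 D A B : form (wtz D A B) eps2 = (2 * B - A)%:~R.
Proof. by rewrite /form /= intrB intrM; ring. Qed.

Lemma form_wtz_eps3 D A B : form (wtz D A B) eps3 = (- A - B)%:~R.
Proof. by rewrite /form /= intrB intrN; ring. Qed.

Definition atypz (D A B : int) : Prop :=
  D = 2 * A - B \/ D = - (2 * A - B) \/ D = 2 * B - A \/ D = - (2 * B - A) \/
  D = - A - B \/ D = A + B.

Lemma atypical_wtz D A B : atypical (wtz D A B) <-> atypz D A B.
Proof.
have intr_eq0P (z : int) : (z%:~R = 0 :> rat) <-> z = 0.
  by split=> [/eqP|->//]; rewrite intr_eq0 => /eqP.
have root_form := (form_delta_add, form_opp, form_wtz_delta,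
                   form_wtz_eps1, form_wtz_eps2, form_wtz_eps3).
split.
- case=> -[[|[|[|//]]] _] [[]] /=;
    rewrite !root_form -?intrN -intrD intr_eq0P /atypz; lia.
- case=> [|[|[|[|[|]]]]] atyp;
    [exists (@Ordinal 3 0 isT), true | exists (@Ordinal 3 0 isT), false
    |exists (@Ordinal 3 1 isT), true | exists (@Ordinal 3 1 isT), false
    |exists (@Ordinal 3 2 isT), true | exists (@Ordinal 3 2 isT), false] => /=;
    rewrite !root_form -?intrN -intrD intr_eq0P; lia.
Qed.

Lemma form_s0 x y : form (s0 x) (s0 y) = form x y.
Proof. by rewrite /form /=; ring. Qed.

Lemma form_s1 x y : form (s1 x) (s1 y) = form x y.
Proof. by rewrite /form /=; ring. Qed.

Lemma form_s2 x y : form (s2 x) (s2 y) = form x y.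
Proof. by rewrite /form /=; ring. Qed.

Lemma inW_isometry sg x y : inW sg -> form (sg x) (sg y) = form x y.
Proof.
move=> W_sg; elim: W_sg x y => // g _ IH x y /=.
- by rewrite form_s0 IH.
- by rewrite form_s1 IH.
- by rewrite form_s2 IH.
Qed.

Lemma form_wtz D A B :
  form (wtz D A B) (wtz D A B) = (4 * (A * A - A * B + B * B) - D * D)%:~R / 2.
Proof. by rewrite /form /= ?intrB ?intrD ?intrM; field. Qed.

Definition f_coord (k n : nat) : int * int * int :=
  let kz := k%:Z in let nz := n%:Z in
  if (n < k)%N then (- (2 * nz + 1), - (nz + kz + 1), - (2 * kz + 1))
  else if n == k then (- (2 * kz + 1), - (2 * kz + 1), - (2 * kz + 1))
  else if (n <= 3 * k)%N then (- (2 * nz + 1), - (2 * kz + 1), - (nz + kz + 1))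
  else if n == (3 * k).+1 then (- (6 * kz + 3), - (2 * kz + 1), - (4 * kz + 2))
  else (- (2 * nz + 1), - (nz - kz), - (nz + kz + 1)).

Lemma f_wtz k n : let: (D, A, B) := f_coord k n in f k n = wtz D A B.
Proof.
rewrite /f /f_coord /nr; case: ifP => _; last case: ifP => [/eqP-> | _];
  last (case: ifP => _; last case: ifP => _);
  by rewrite /wtz; congr Wt; rewrite ?pmulrn ?intrN ?intrD ?intrB ?intrM; field.
Qed.

Lemma f_coord_spec k n : let: (D, A, B) := f_coord k n in
  [/\ (D %% 2)%Z = 1, atypz D A B &
      4 * (A * A - A * B + B * B) - D * D = 3 * (2 * k%:Z + 1) ^+ 2].
Proof.
rewrite /f_coord /atypz; do 4 (case: ifP => _; first by split; [lia | lia | ring]).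
by split; [lia | lia | ring].
Qed.

Lemma Xrho_atypical_wtzP x : inXrho x /\ atypical x <->
  exists D A B, [/\ x = wtz D A B, (D %% 2)%Z = 1 & atypz D A B].
Proof.
split.
- by case=> /inXrho_wtzP [D [A [B [-> oddD]]]] /atypical_wtz; exists D, A, B.
- case=> D [A [B [-> oddD atypD]]]; split; last exact/atypical_wtz.
  by apply/inXrho_wtzP; exists D, A, B.
Qed.

Lemma inW_Xrho_atypical sg x : inW sg -> inXrho x -> atypical x ->
  inXrho (sg x) /\ atypical (sg x).
Proof.
move=> W_sg Xx atyp_x; elim: W_sg => [|g _ IH|g _ IH|g _ IH] //=;
  move/Xrho_atypical_wtzP: IH => [D [A [B [-> oddD atypD]]]];
  apply/Xrho_atypical_wtzP; rewrite ?s0_wtz ?s1_wtz ?s2_wtz;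
  (do 3 eexists); split; try reflexivity; move: atypD; rewrite /atypz; lia.
Qed.

Lemma f_Xrho_atypical k n : inXrho (f k n) /\ atypical (f k n).
Proof.
apply/Xrho_atypical_wtzP; move: (f_wtz k n) (f_coord_spec k n).
by case: (f_coord k n) => [[D A] B] -> [oddD atypD _]; exists D, A, B.
Qed.

Lemma form_f k n : form (f k n) (f k n) = (3 * (2 * k%:Z + 1) ^+ 2)%:~R / 2.
Proof.
move: (f_wtz k n) (f_coord_spec k n).
by case: (f_coord k n) => [[D A] B] -> [_ _ normD]; rewrite form_wtz normD.
Qed.

Lemma WT_Xrho_atypical k x : WT k x -> inXrho x /\ atypical x.
Proof.
case=> sg [n [W_sg ->]]; have [Xf atyp_f] := f_Xrho_atypical k n.
exact: inW_Xrho_atypical.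
Qed.

Lemma WT_form k x : WT k x -> form x x = (3 * (2 * k%:Z + 1) ^+ 2)%:~R / 2.
Proof. by case=> sg [n [W_sg ->]]; rewrite inW_isometry ?form_f. Qed.

Lemma WT_disjoint k1 k2 x : WT k1 x -> WT k2 x -> k1 = k2.
Proof.
move=> /WT_form norm1 /WT_form; rewrite norm1 => /(congr1 (fun q => q * 2)).
rewrite !divfK // => /(intr_inj (R := rat)) eq_norm.
nia.
Qed.

Definition in_WT (x : wt) : Prop := exists k, WT k x.

Lemma in_WT_f k n : in_WT (f k n).
Proof. by exists k, id, n; split => //; constructor. Qed.

Lemma in_WT_s0 x : in_WT (s0 x) -> in_WT x.
Proof.
case=> k [sg [n [W_sg eq_x]]]; exists k, (s0 \o sg), n; split; first by constructor.
by rewrite /= -eq_x; case: x {eq_x} => d a b; rewrite /s0 /= opprK.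
Qed.

Lemma in_WT_s1 x : in_WT (s1 x) -> in_WT x.
Proof.
case=> k [sg [n [W_sg eq_x]]]; exists k, (s1 \o sg), n; split; first by constructor.
by rewrite /= -eq_x; case: x {eq_x}.
Qed.

Lemma in_WT_s2 x : in_WT (s2 x) -> in_WT x.
Proof.
case=> k [sg [n [W_sg eq_x]]]; exists k, (s2 \o sg), n; split; first by constructor.
by rewrite /= -eq_x; case: x {eq_x} => d a b; rewrite /s2 /= opprB addrC subrK.
Qed.

(* The longest element (s1 s2)^3 of W(G2) acts as -1 on the eps-part. *)
Lemma in_WT_oppeps D A B : in_WT (wtz D (- A) (- B)) -> in_WT (wtz D A B).
Proof.
move=> WT_opp.
do 3 (apply: in_WT_s1; rewrite s1_wtz; apply: in_WT_s2; rewrite s2_wtz).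
by move: WT_opp; congr (in_WT (wtz _ _ _)); ring.
Qed.

Lemma in_WT_f_param k n :
  in_WT (wtz (- (2 * n%:Z + 1)) (- (n%:Z + k%:Z + 1)) (- (2 * k%:Z + 1))).
Proof.
move: (in_WT_f k n) (f_wtz k n); rewrite /f_coord.
case: ifP => [_ WTf <- // | _].
case: ifP => [/eqP-> WTf eq_f | _].
  by move: WTf; rewrite eq_f; congr (in_WT (wtz _ _ _)); lia.
case: ifP => [_ WTf eq_f | _].
  by apply: in_WT_s1; rewrite s1_wtz -eq_f.
case: ifP => [/eqP-> | _] WTf eq_f; apply: in_WT_s1; rewrite s1_wtz.
  by move: WTf; rewrite eq_f; congr (in_WT (wtz _ _ _)); lia.
apply: in_WT_s2; rewrite s2_wtz.
by move: WTf; rewrite eq_f; congr (in_WT (wtz _ _ _)); lia.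
Qed.

Lemma in_WT_delta_eps1_neg D A B :
  (D %% 2)%Z = 1 -> D = 2 * A - B -> D < 0 -> B < 0 ->
  in_WT (wtz D A B).
Proof.
move=> oddD eqD D_lt0 B_lt0.
have [n eq_n] : exists n : nat, D = - (2 * n%:Z + 1).
  by exists (absz ((- D - 1) %/ 2)%Z); lia.
have [k eq_k] : exists k : nat, B = - (2 * k%:Z + 1).
  by exists (absz ((- B - 1) %/ 2)%Z); lia.
by move: (in_WT_f_param k n); congr (in_WT (wtz _ _ _)); lia.
Qed.

Lemma in_WT_delta_eps1_Dneg D A B : (D %% 2)%Z = 1 -> D = 2 * A - B -> D < 0 ->
  in_WT (wtz D A B).
Proof.
move=> oddD eqD D_lt0; case: (ltrgt0P B) => [B_gt0 | B_lt0 | B0]; last by lia.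
- apply: in_WT_s2; rewrite s2_wtz; apply: in_WT_oppeps.
  by apply: in_WT_delta_eps1_neg; lia.
- exact: in_WT_delta_eps1_neg.
Qed.

Lemma in_WT_delta_eps1 D A B : (D %% 2)%Z = 1 -> D = 2 * A - B -> in_WT (wtz D A B).
Proof.
move=> oddD eqD; case: (ltrgt0P D) => [D_gt0 | D_lt0 | D0]; last by lia.
- apply: in_WT_s0; rewrite s0_wtz; apply: in_WT_oppeps.
  by apply: in_WT_delta_eps1_Dneg; lia.
- exact: in_WT_delta_eps1_Dneg.
Qed.

Lemma in_WT_atypz D A B : (D %% 2)%Z = 1 -> atypz D A B -> in_WT (wtz D A B).
Proof.
move=> oddD; case=> [|[|[|[|[|]]]]] eqD.
- exact: in_WT_delta_eps1.
- by apply: in_WT_s0; rewrite s0_wtz; apply: in_WT_delta_eps1; lia.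
- by apply: in_WT_s1; rewrite s1_wtz; apply: in_WT_delta_eps1; lia.
- by apply: in_WT_s0; rewrite s0_wtz; apply: in_WT_s1; rewrite s1_wtz;
    apply: in_WT_delta_eps1; lia.
- by apply: in_WT_s0; rewrite s0_wtz; apply: in_WT_s2; rewrite s2_wtz;
    apply: in_WT_s1; rewrite s1_wtz; apply: in_WT_delta_eps1; lia.
- by apply: in_WT_s2; rewrite s2_wtz; apply: in_WT_s1; rewrite s1_wtz;
    apply: in_WT_delta_eps1; lia.
Qed.

Theorem lemma3p3 :
  (forall k1 k2 : nat, k1 <> k2 -> forall x : wt, ~ (WT k1 x /\ WT k2 x)) /\
  (forall x : wt, (exists k : nat, WT k x) <-> (inXrho x /\ atypical x)).
Proof.
split.
- by move=> k1 k2 neq_k x [/WT_disjoint eq_k /eq_k].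
- move=> x; split; first by case=> k /WT_Xrho_atypical.
  by case/Xrho_atypical_wtzP => D [A [B [-> oddD atypD]]]; apply: in_WT_atypz.
Qed.
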